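(* There is a constant $C>0$ such that for every $d\ge2$ and $h\ge1$, if $G$ is the rooted tree of depth $h$ in which every non-leaf vertex has exactly $d$ children and all leaves are at depth $h$, with $n$ vertices in total, then for every rule $\mathcal{R}$ the greedy random walk on $G$ started at the root satisfies $\mathbb{E}[C_E(G)]\le C\,n\log_d n$.
   Context: A greedy random walk (GRW) on a connected locally finite graph $G=(V,E)$ with rule $\mathcal{R}$ started at $v_0$: $X_0=v_0$; with $H_t=\{\{X_{s-1},X_s\}:0<s\le t\}$ and $J_t(v)=\{e\in E: v\in e, e\notin H_t\}$, if $J_t(X_t)\ne\emptyset$ then $X_{t+1}=w$ for some $w$ with $\{X_t,w\}\in J_t(X_t)$, chosen according to an arbitrary (possibly randomized, history-dependent) rule $\mathcal{R}$; if $J_t(X_t)=\emptyset$ then $X_{t+1}$ is a uniformly random neighbor of $X_t$. $C_E(G)=\min\{t:H_t=E\}$ is the edge cover time. *)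

From Stdlib Require Import Reals List Arith Bool.
Import ListNotations.
Open Scope R_scope.

(* Vertices of the complete d-ary tree of depth h: addresses from the root,
   i.e. lists of child indices (each < d) of length <= h.  Root = []. *)
Definition V := list nat.

Definition veq (u v : V) : bool :=
  if list_eq_dec Nat.eq_dec u v then true else false.

Definition children (d h : nat) (u : V) : list V :=
  if Nat.ltb (length u) h then map (fun i => u ++ [i]) (seq 0 d) else [].

Definition parent_list (u : V) : list V :=
  match u with [] => [] | _ => [removelast u] end.

Definition nbrs (d h : nat) (u : V) : list V := parent_list u ++ children d h u.

Fixpoint level (d k : nat) : list V :=
  match k with
  | O => [[]]
  | S k' => flat_map (fun u => map (fun i => u ++ [i]) (seq 0 d)) (level d k')
  end.

Definition verts (d h : nat) : list V := flat_map (level d) (seq 0 (S h)).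

Definition nverts (d h : nat) : nat := length (verts d h).

Definition edges (d h : nat) : list (V * V) :=
  flat_map (fun u => map (fun c => (u, c)) (children d h u)) (verts d h).

(* A history is the walk so far [X_0; ...; X_t] (chronological). *)
Definition cur (p : list V) : V := last p [].

Definition steps (p : list V) : list (V * V) := combine (removelast p) (tl p).

(* {x,y} is in H_t *)
Definition used (p : list V) (x y : V) : bool :=
  existsb (fun ab => orb (veq (fst ab) x && veq (snd ab) y)
                     (veq (fst ab) y && veq (snd ab) x)) (steps p).

Definition covered (d h : nat) (p : list V) : bool :=
  forallb (fun e => used p (fst e) (snd e)) (edges d h).

(* endpoints w of the edges in J_t(X_t) *)
Definition unused_nbrs (d h : nat) (p : list V) : list V :=
  filter (fun w => negb (used p (cur p) w)) (nbrs d h (cur p)).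

(* A (randomized, history-dependent) rule: given the history p, rule p w is the
   probability of moving to w; it must be a probability distribution on the
   endpoints of the unused edges at the current vertex whenever J_t(X_t) is nonempty. *)
Definition valid_rule (d h : nat) (rule : list V -> V -> R) : Prop :=
  forall p, unused_nbrs d h p <> [] ->
    (forall w, 0 <= rule p w) /\
    (forall w, ~ In w (unused_nbrs d h p) -> rule p w = 0) /\
    fold_right Rplus 0 (map (rule p) (unused_nbrs d h p)) = 1.

Definition step (d h : nat) (rule : list V -> V -> R) (p : list V) (w : V) : R :=
  match unused_nbrs d h p with
  | [] => / INR (length (nbrs d h (cur p)))
  | _ => rule p w
  end.

(* law of the history (X_0,...,X_t), X_0 = root, as a list of (path, probability) *)
Fixpoint dist (d h : nat) (rule : list V -> V -> R) (t : nat) : list (list V * R) :=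
  match t with
  | O => [([[]], 1)]
  | S t' =>
      flat_map (fun pq =>
        map (fun w => (fst pq ++ [w], snd pq * step d h rule (fst pq) w))
            (nbrs d h (cur (fst pq))))
        (dist d h rule t')
  end.

(* P(C_E(G) > t) = P(H_t <> E) *)
Definition tail_prob (d h : nat) (rule : list V -> V -> R) (t : nat) : R :=
  fold_right Rplus 0
    (map (fun pq => if covered d h (fst pq) then 0 else snd pq) (dist d h rule t)).

(* sum_{t<N} P(C_E > t); E[C_E] is the supremum over N of this *)
Definition partial_expect (d h : nat) (rule : list V -> V -> R) (N : nat) : R :=
  fold_right Rplus 0 (map (tail_prob d h rule) (seq 0 N)).

(* The proof is a potential-function argument.  Call [return_time d j] the
   expected time for the simple random walk to climb out of a complete subtree
   of height j through the edge above it.  By induction on the walk, the used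
   edges always consist of the root-to-current path together with fully explored
   subtrees hanging off it.  Hence the potential
     sum over unused edges e of (1 + return time below e)
       + sum over the path edges of their return times
   decreases in expectation by at least 1 per step until the cover time: a
   greedy step crosses an unused edge downwards, and a random step happens at a
   vertex whose subtree is explored, where the climbing time is harmonic.  The
   initial potential is at most 2 (h + 1) n, and h <= log_d n. *)

From Pilot Require Import Defs.
From Stdlib Require Import Reals List Arith Lia Lra Bool.
Import ListNotations.
Open Scope R_scope.

Definition sumR {A} (f : A -> R) (l : list A) : R := fold_right Rplus 0 (map f l).

Section ListSums.

Context {A : Type}.
Implicit Types (l : list A) (f g : A -> R).

Lemma sumR_app l1 l2 f : sumR f (l1 ++ l2) = sumR f l1 + sumR f l2.
Proof. unfold sumR; induction l1; simpl; [lra|]. rewrite IHl1; lra. Qed.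

Lemma sumR_ext l f g : (forall x, In x l -> f x = g x) -> sumR f l = sumR g l.
Proof. unfold sumR; induction l; simpl; intros H; auto. rewrite H, IHl; auto. Qed.

Lemma sumR_le l f g : (forall x, In x l -> f x <= g x) -> sumR f l <= sumR g l.
Proof. unfold sumR; induction l; simpl; intros H; [lra|]. apply Rplus_le_compat; auto. Qed.

Lemma sumR_nonneg l f : (forall x, In x l -> 0 <= f x) -> 0 <= sumR f l.
Proof. unfold sumR; induction l; simpl; intros H; [lra|]. apply Rplus_le_le_0_compat; auto. Qed.

Lemma sumR_plus l f g : sumR (fun x => f x + g x) l = sumR f l + sumR g l.
Proof. unfold sumR; induction l; simpl; [lra|]. rewrite IHl; lra. Qed.

Lemma sumR_scal l c f : sumR (fun x => c * f x) l = c * sumR f l.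
Proof. unfold sumR; induction l; simpl; [lra|]. rewrite IHl; lra. Qed.

Lemma sumR_const l c : sumR (fun _ => c) l = INR (length l) * c.
Proof. unfold sumR; induction l; cbn [length fold_right map]; [simpl; lra|]. rewrite IHl, S_INR; lra. Qed.

Lemma sumR_map {B} l (m : A -> B) (f : B -> R) : sumR f (map m l) = sumR (fun x => f (m x)) l.
Proof. unfold sumR; rewrite map_map; reflexivity. Qed.

Lemma sumR_filter l P f : (forall x, In x l -> P x = false -> f x = 0) ->
  sumR f (filter P l) = sumR f l.
Proof.
  unfold sumR; induction l as [|a l IH]; simpl; intros H; auto.
  destruct (P a) eqn:E; simpl; rewrite IH; auto. rewrite (H a); auto. lra.
Qed.

Lemma sumR_le_sub l f g e K : In e l -> (forall x, In x l -> g x <= f x) ->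
  g e = f e - K -> sumR g l <= sumR f l - K.
Proof.
  intros He Hle Hk. induction l as [|a l IH]; [destruct He|]. unfold sumR in *; simpl.
  assert (Hl : fold_right Rplus 0 (map g l) <= fold_right Rplus 0 (map f l))
    by (apply (sumR_le l g f); intros; apply Hle; simpl; auto).
  destruct He as [->|He]; [lra|].
  assert (H1 := Hle a (or_introl eq_refl)).
  assert (H2 := IH He (fun x Hx => Hle x (or_intror Hx))). lra.
Qed.

End ListSums.

Lemma sumR_flat_map {A B} (l : list A) (m : A -> list B) (f : B -> R) :
  sumR f (flat_map m l) = sumR (fun a => sumR f (m a)) l.
Proof. induction l as [|a l IH]; [reflexivity|]. change (flat_map m (a :: l)) with (m a ++ flat_map m l). rewrite sumR_app, IH. reflexivity. Qed.

Definition prefix (c u : V) : Prop := exists a, c ++ a = u.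

Lemma prefix_refl u : prefix u u.
Proof. exists []; apply app_nil_r. Qed.

Lemma prefix_snoc_r c x i : prefix c x -> prefix c (x ++ [i]).
Proof. intros [a <-]. exists (a ++ [i]). apply app_assoc. Qed.

Lemma prefix_length c u : prefix c u -> (length c <= length u)%nat.
Proof. intros [a <-]. rewrite length_app; lia. Qed.

Lemma prefix_snoc c x i : prefix c (x ++ [i]) -> c = x ++ [i] \/ prefix c x.
Proof.
  intros [a H]. destruct (list_eq_dec Nat.eq_dec a []) as [->|Ha].
  - left; rewrite app_nil_r in H; exact H.
  - right. destruct (exists_last Ha) as [a' [j ->]]. rewrite app_assoc in H.
    apply app_inj_tail in H as [H _]. exists a'; exact H.
Qed.

Lemma length_snoc (x : V) i : length (x ++ [i]) = S (length x).
Proof. rewrite length_app; simpl; lia. Qed.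

Lemma In_level d k v : In v (level d k) <-> length v = k /\ Forall (fun i => (i < d)%nat) v.
Proof.
  revert v; induction k as [|k IH]; intros v; simpl.
  - split.
    + intros [<-|[]]; split; auto.
    + intros [Hl _]; destruct v; simpl in *; auto; lia.
  - rewrite in_flat_map. split.
    + intros [u [Hu Hv]]. apply in_map_iff in Hv as [i [<- Hi]].
      apply in_seq in Hi. apply IH in Hu as [Hl Hf].
      rewrite length_snoc; split; [lia|]. apply Forall_app; split; auto.
      constructor; [lia|constructor].
    + intros [Hl Hf]. assert (Hne : v <> []) by (intros ->; simpl in Hl; lia).
      destruct (exists_last Hne) as [u [i ->]].
      apply Forall_app in Hf as [Hf1 Hf2]. inversion Hf2; subst.
      rewrite length_snoc in Hl.
      exists u; split; [apply IH; split; auto; lia|].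
      apply in_map_iff; exists i; split; auto. apply in_seq; lia.
Qed.

Lemma In_verts d h v : In v (verts d h) <-> (length v <= h)%nat /\ Forall (fun i => (i < d)%nat) v.
Proof.
  unfold verts. rewrite in_flat_map. split.
  - intros [k [Hk Hv]]. apply in_seq in Hk. apply In_level in Hv as [Hl Hf]. split; auto; lia.
  - intros [Hl Hf]. exists (length v); split; [apply in_seq; lia|]. apply In_level; auto.
Qed.

Lemma In_children d h u c : In c (children d h u) <->
  (length u < h)%nat /\ exists i, (i < d)%nat /\ c = u ++ [i].
Proof.
  unfold children. destruct (Nat.ltb_spec (length u) h).
  - rewrite in_map_iff. split.
    + intros [i [<- Hi]]. apply in_seq in Hi. split; auto. exists i; split; auto; lia.
    + intros [_ [i [Hi ->]]]. exists i; split; auto. apply in_seq; lia.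
  - simpl; split; [tauto|]. intros [H' _]; lia.
Qed.

Lemma In_edges d h u c : In (u, c) (edges d h) <-> In u (verts d h) /\ In c (children d h u).
Proof.
  unfold edges. rewrite in_flat_map. split.
  - intros [x [Hx Hm]]. apply in_map_iff in Hm as [c' [Heq Hc]]. inversion Heq; subst; auto.
  - intros [Hu Hc]. exists u; split; auto. apply in_map_iff; exists c; auto.
Qed.

Lemma In_nbrs d h x w :
  In w (nbrs d h x) <-> (x <> [] /\ w = removelast x) \/ In w (children d h x).
Proof.
  unfold nbrs, parent_list. rewrite in_app_iff. destruct x; simpl.
  - split; [intros [[]|H]; auto|]. intros [[H _]|H]; auto; congruence.
  - split; intros [H|H]; auto.
    + destruct H as [<-|[]]. left; split; auto; congruence.
    + destruct H as [_ ->]; auto.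
Qed.

Lemma nbrs_nonroot d h x : x <> [] -> nbrs d h x = removelast x :: children d h x.
Proof. intros Hx. unfold nbrs, parent_list. destruct x; [congruence|reflexivity]. Qed.

Lemma edge_length d h u c : In (u, c) (edges d h) -> length c = S (length u) /\ (length u < h)%nat.
Proof.
  intros H. apply In_edges in H as [_ Hc]. apply In_children in Hc as [Hl [i [_ ->]]].
  rewrite length_snoc; auto.
Qed.

Lemma edge_above d h u c v b : In (u, c) (edges d h) -> prefix (v ++ [b]) u ->
  In (v, v ++ [b]) (edges d h).
Proof.
  intros He [a Ha]. apply In_edges in He as [Hu Hc]. apply In_children in Hc as [Hl _].
  apply In_verts in Hu as [_ Hf]. subst u. rewrite <- app_assoc in Hf, Hl.
  apply Forall_app in Hf as [Hv Hb]. inversion Hb; subst. rewrite length_app in Hl.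
  apply In_edges; split.
  - apply In_verts; split; auto; lia.
  - apply In_children; split; [simpl in Hl; lia|]. exists b; auto.
Qed.

Lemma veq_true u v : veq u v = true <-> u = v.
Proof. unfold veq; destruct (list_eq_dec Nat.eq_dec u v); split; congruence. Qed.

Lemma veq_refl u : veq u u = true.
Proof. apply veq_true; reflexivity. Qed.

Lemma used_sym p x y : used p x y = used p y x.
Proof.
  unfold used. induction (steps p) as [|a l IH]; simpl; auto.
  rewrite IH. f_equal. apply orb_comm.
Qed.

Lemma combine_snoc {A B} (l1 : list A) (l2 : list B) a b :
  length l1 = length l2 -> combine (l1 ++ [a]) (l2 ++ [b]) = combine l1 l2 ++ [(a, b)].
Proof.
  revert l2; induction l1 as [|x l1 IH]; intros [|y l2] H; simpl in *; try lia; auto.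
  rewrite IH; auto.
Qed.

Lemma steps_app p w : p <> [] -> steps (p ++ [w]) = steps p ++ [(cur p, w)].
Proof.
  intros Hp. unfold steps. rewrite removelast_last.
  assert (Htl : tl (p ++ [w]) = tl p ++ [w]) by (destruct p; [congruence|reflexivity]).
  rewrite Htl, (app_removelast_last [] Hp) at 1. apply combine_snoc.
  destruct (exists_last Hp) as [p0 [x ->]].
  rewrite removelast_last, length_tl, !length_app. simpl. lia.
Qed.

Lemma cur_app p w : cur (p ++ [w]) = w.
Proof. unfold cur; apply last_last. Qed.

Lemma used_app p w a b : p <> [] ->
  used (p ++ [w]) a b =
  (used p a b || ((veq (cur p) a && veq w b) || (veq (cur p) b && veq w a)))%bool.
Proof.
  intros Hp. unfold used. rewrite steps_app by exact Hp. rewrite existsb_app. simpl.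
  rewrite orb_false_r. reflexivity.
Qed.

Lemma used_app_step p w : p <> [] -> used (p ++ [w]) (cur p) w = true.
Proof. intros Hp. rewrite used_app by exact Hp. rewrite !veq_refl. apply orb_true_r. Qed.

Lemma used_mono p w a b : p <> [] -> used p a b = true -> used (p ++ [w]) a b = true.
Proof. intros Hp H. rewrite used_app, H by exact Hp. reflexivity. Qed.

Lemma used_app_same p w a b : p <> [] -> used p (cur p) w = true ->
  used (p ++ [w]) a b = used p a b.
Proof.
  intros Hp Hu. rewrite used_app by exact Hp.
  destruct (used p a b) eqn:E; [reflexivity|]. simpl.
  destruct (veq (cur p) a && veq w b)%bool eqn:E1.
  { apply andb_true_iff in E1 as [E1 E2]. apply veq_true in E1, E2. subst. congruence. }
  destruct (veq (cur p) b && veq w a)%bool eqn:E2; [|reflexivity].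
  apply andb_true_iff in E2 as [E2 E3]. apply veq_true in E2, E3. subst.
  rewrite used_sym in Hu. congruence.
Qed.

Lemma covered_mono d h p w : p <> [] -> covered d h p = true -> covered d h (p ++ [w]) = true.
Proof.
  unfold covered; intros Hp H. rewrite forallb_forall in *. intros e He.
  apply used_mono; auto.
Qed.

Lemma In_unused_nbrs d h p w :
  In w (unused_nbrs d h p) <-> In w (nbrs d h (cur p)) /\ used p (cur p) w = false.
Proof. unfold unused_nbrs. rewrite filter_In, negb_true_iff. reflexivity. Qed.

Lemma unused_nbrs_nil d h p w : unused_nbrs d h p = [] -> In w (nbrs d h (cur p)) ->
  used p (cur p) w = true.
Proof.
  intros H Hw. destruct (used p (cur p) w) eqn:E; auto.
  assert (Hin : In w (unused_nbrs d h p)) by (apply In_unused_nbrs; auto).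
  rewrite H in Hin; destruct Hin.
Qed.

Definition subtree_used d h p (c : V) : Prop :=
  forall u c', In (u, c') (edges d h) -> prefix c u -> used p u c' = true.

(* The greedy walk keeps the used edges in the shape "the root-to-current path,
   plus some subtrees hanging off it that are completely explored". *)
Record walk_inv d h (p : list V) : Prop := {
  inv_vertex : In (cur p) (verts d h);
  inv_path : forall c, prefix c (cur p) -> c <> [] -> used p (removelast c) c = true;
  inv_used : forall u c, In (u, c) (edges d h) -> used p u c = true ->
    prefix c (cur p) \/ subtree_used d h p c }.

Arguments inv_vertex {d h p}.
Arguments inv_path {d h p}.
Arguments inv_used {d h p}.

Lemma subtree_used_mono d h p w c : p <> [] ->
  subtree_used d h p c -> subtree_used d h (p ++ [w]) c.
Proof. intros Hp H u c' He Hc. apply used_mono; auto. Qed.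

Lemma covered_of_subtree_used d h p : subtree_used d h p [] -> covered d h p = true.
Proof.
  intros H. unfold covered. apply forallb_forall. intros [u c] He.
  apply H; [exact He|]. exists u; reflexivity.
Qed.

Lemma walk_inv_init d h : walk_inv d h [[]].
Proof.
  constructor; unfold cur; simpl.
  - apply In_verts; simpl; split; [lia|constructor].
  - intros c [a Hc] Hne. destruct c; simpl in *; congruence.
  - intros u c _ Hu. discriminate.
Qed.

Lemma parent_edge_used d h p : walk_inv d h p -> cur p <> [] ->
  used p (cur p) (removelast (cur p)) = true.
Proof.
  intros Hi Hx. rewrite used_sym. apply (inv_path Hi); [apply prefix_refl|exact Hx].
Qed.

(* Each child edge at the current vertex is used but off the current path,
   so the subtree below it is explored. *)
Lemma subtree_used_cur d h p : walk_inv d h p ->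
  (forall c, In c (children d h (cur p)) -> used p (cur p) c = true) ->
  subtree_used d h p (cur p).
Proof.
  intros Hi Hch u c He [[|b bs] Ha].
  - rewrite app_nil_r in Ha; subst u. apply Hch. apply In_edges in He; tauto.
  - assert (Hpre : prefix (cur p ++ [b]) u) by (exists bs; rewrite <- app_assoc; exact Ha).
    assert (Hxb := edge_above d h u c (cur p) b He Hpre).
    assert (Hub : used p (cur p) (cur p ++ [b]) = true)
      by (apply Hch; apply In_edges in Hxb; tauto).
    destruct (inv_used Hi _ _ Hxb Hub) as [Hbx|Hsub].
    + apply prefix_length in Hbx. rewrite length_snoc in Hbx. lia.
    + apply Hsub; assumption.
Qed.

Lemma walk_inv_down d h p w : p <> [] -> walk_inv d h p ->
  In w (children d h (cur p)) -> walk_inv d h (p ++ [w]).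
Proof.
  intros Hp Hi Hw. assert (Hnew := used_app_step p w Hp).
  apply In_children in Hw as [Hxl [i [Hid ->]]].
  constructor; rewrite cur_app.
  - destruct (proj1 (In_verts d h _) (inv_vertex Hi)) as [_ Hf].
    apply In_verts; rewrite length_snoc; split; [lia|].
    apply Forall_app; split; auto.
  - intros c Hc Hne. apply prefix_snoc in Hc as [->|Hc].
    + rewrite removelast_last; exact Hnew.
    + apply used_mono; [exact Hp|]. apply (inv_path Hi); assumption.
  - intros u c He Hu. rewrite used_app in Hu by exact Hp.
    destruct (used p u c) eqn:Eo.
    + destruct (inv_used Hi _ _ He Eo) as [Hpre|Hs].
      * left; apply prefix_snoc_r; exact Hpre.
      * right; apply subtree_used_mono; assumption.
    + simpl in Hu. apply orb_true_iff in Hu as [Hu|Hu];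
        apply andb_true_iff in Hu as [H1 H2]; apply veq_true in H1, H2; subst u c.
      * left; apply prefix_refl.
      * apply edge_length in He as [Hl _]. rewrite length_snoc in Hl. lia.
Qed.

Lemma walk_inv_up d h p : p <> [] -> walk_inv d h p -> cur p <> [] ->
  unused_nbrs d h p = [] -> walk_inv d h (p ++ [removelast (cur p)]).
Proof.
  intros Hp Hi Hx Hnil.
  assert (Hall : forall w, In w (nbrs d h (cur p)) -> used p (cur p) w = true)
    by (intros w; apply (unused_nbrs_nil d h); exact Hnil).
  assert (Hsub : subtree_used d h p (cur p))
    by (apply subtree_used_cur; [exact Hi|intros c Hc; apply Hall, In_nbrs; auto]).
  assert (Hup : used p (cur p) (removelast (cur p)) = true)
    by (apply Hall, In_nbrs; left; auto).
  destruct (exists_last Hx) as [y [l Hxy]].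
  constructor; rewrite cur_app.
  - destruct (proj1 (In_verts d h _) (inv_vertex Hi)) as [Hl Hf].
    rewrite Hxy, removelast_last in *. rewrite length_snoc in Hl.
    apply Forall_app in Hf as [Hf _]. apply In_verts; split; [lia|exact Hf].
  - intros c Hc Hne. apply used_mono; [exact Hp|]. apply (inv_path Hi); [|exact Hne].
    rewrite Hxy, removelast_last in *. apply prefix_snoc_r; exact Hc.
  - intros u c He Hu. rewrite (used_app_same _ _ _ _ Hp Hup) in Hu.
    destruct (inv_used Hi _ _ He Hu) as [Hpre|Hs]; [|right; apply subtree_used_mono; assumption].
    rewrite Hxy in Hpre. rewrite Hxy, removelast_last.
    apply prefix_snoc in Hpre as [Hc|Hpre]; [|left; exact Hpre].
    right. subst c. rewrite <- Hxy. apply subtree_used_mono; assumption.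
Qed.

Lemma unused_nbr_child d h p w : walk_inv d h p -> In w (unused_nbrs d h p) ->
  In w (children d h (cur p)).
Proof.
  intros Hi Hw. apply In_unused_nbrs in Hw as [Hw Hu].
  apply In_nbrs in Hw as [[Hx ->]|Hc]; [|exact Hc].
  rewrite (parent_edge_used d h) in Hu by assumption. discriminate.
Qed.

Lemma walk_inv_step d h p w : p <> [] -> walk_inv d h p -> In w (nbrs d h (cur p)) ->
  unused_nbrs d h p = [] \/ In w (unused_nbrs d h p) -> walk_inv d h (p ++ [w]).
Proof.
  intros Hp Hi Hw [Hnil|Hun].
  - apply In_nbrs in Hw as [[Hx ->]|Hc].
    + apply walk_inv_up; assumption.
    + apply walk_inv_down; assumption.
  - apply walk_inv_down; [exact Hp|exact Hi|]. apply unused_nbr_child; assumption.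
Qed.

Fixpoint tree_size (d j : nat) : nat :=
  match j with O => 1 | S j' => 1 + d * tree_size d j' end.

(* Expected time for the simple random walk started at the top of a complete
   d-ary tree of height j, hanging from a parent by one edge, to reach that
   parent: 2 |E| - 1, where the |E| = tree_size d j edges are those of the
   subtree together with the hanging edge. *)
Definition return_time (d j : nat) : R := 2 * INR (tree_size d j) - 1.

Fixpoint climb_time (d h m : nat) : R :=
  match m with O => 0 | S m' => climb_time d h m' + return_time d (h - m) end.

Definition unused_weight d h (p : list V) : R :=
  sumR (fun e : V * V =>
          if used p (fst e) (snd e) then 0 else 1 + return_time d (h - length (snd e)))
       (edges d h).

Definition potential d h (p : list V) : R :=
  unused_weight d h p + climb_time d h (length (cur p)).

Lemma return_time_ge1 d j : 1 <= return_time d j.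
Proof.
  unfold return_time. assert (H : (1 <= tree_size d j)%nat) by (destruct j; simpl; lia).
  apply le_INR in H. simpl in H. lra.
Qed.

Lemma climb_time_nonneg d h m : 0 <= climb_time d h m.
Proof. induction m; simpl; [lra|]. assert (H := return_time_ge1 d (h - S m)). lra. Qed.

Lemma unused_weight_nonneg d h p : 0 <= unused_weight d h p.
Proof.
  apply sumR_nonneg. intros e _. destruct used; [lra|].
  assert (H := return_time_ge1 d (h - length (snd e))). lra.
Qed.

Lemma potential_nonneg d h p : 0 <= potential d h p.
Proof.
  unfold potential. assert (H1 := unused_weight_nonneg d h p).
  assert (H2 := climb_time_nonneg d h (length (cur p))). lra.
Qed.

(* The climbing time is harmonic for the simple random walk on the depths. *)
Lemma climb_time_inner d h m : (S m < h)%nat ->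
  climb_time d h m + INR d * climb_time d h (S (S m)) = (INR d + 1) * (climb_time d h (S m) - 1).
Proof.
  intros Hm. cbn [climb_time]. unfold return_time.
  replace (h - S m)%nat with (S (h - S (S m))) by lia. cbn [tree_size].
  rewrite plus_INR, mult_INR. simpl (INR 1). ring.
Qed.

Lemma climb_time_leaf d h m : S m = h -> climb_time d h m = climb_time d h (S m) - 1.
Proof.
  intros Hm. cbn [climb_time]. replace (h - S m)%nat with 0%nat by lia.
  unfold return_time; simpl. lra.
Qed.

Lemma unused_weight_used_step d h p w : p <> [] -> used p (cur p) w = true ->
  unused_weight d h (p ++ [w]) = unused_weight d h p.
Proof.
  intros Hp Hu. apply sumR_ext. intros e _. rewrite used_app_same; auto.
Qed.

Lemma potential_down d h p w : p <> [] -> walk_inv d h p -> In w (children d h (cur p)) ->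
  used p (cur p) w = false -> potential d h (p ++ [w]) <= potential d h p - 1.
Proof.
  intros Hp Hi Hw Hu. unfold potential. rewrite cur_app.
  assert (Hlw : length w = S (length (cur p)))
    by (apply In_children in Hw as [_ [i [_ ->]]]; apply length_snoc).
  assert (HU : unused_weight d h (p ++ [w])
               <= unused_weight d h p - (1 + return_time d (h - length w))).
  { apply (sumR_le_sub _ _ _ (cur p, w)).
    - apply In_edges; split; [exact (inv_vertex Hi)|exact Hw].
    - intros [u c] _. cbn [fst snd]. destruct (used p u c) eqn:E.
      + rewrite used_mono by assumption. lra.
      + destruct (used (p ++ [w]) u c); [|lra].
        assert (H := return_time_ge1 d (h - length c)). lra.
    - cbn [fst snd]. rewrite Hu, used_app_step by exact Hp. lra. }
  rewrite Hlw in *. cbn [climb_time]. lra.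
Qed.

Lemma step_nonneg d h rule p w : valid_rule d h rule -> 0 <= step d h rule p w.
Proof.
  intros Hv. unfold step. destruct (unused_nbrs d h p) eqn:E.
  - destruct (length (nbrs d h (cur p))) as [|n]; [simpl; rewrite Rinv_0; lra|].
    apply Rlt_le, Rinv_0_lt_compat, lt_0_INR; lia.
  - apply Hv. rewrite E; congruence.
Qed.

Definition next_potential d h rule (p : list V) : R :=
  sumR (fun w => step d h rule p w * potential d h (p ++ [w])) (nbrs d h (cur p)).

Lemma next_potential_random d h rule p : p <> [] -> walk_inv d h p ->
  covered d h p = false -> unused_nbrs d h p = [] ->
  next_potential d h rule p <= potential d h p - 1.
Proof.
  intros Hp Hi Hcov Hnil.
  assert (Hall : forall w, In w (nbrs d h (cur p)) -> used p (cur p) w = true)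
    by (intros w; apply (unused_nbrs_nil d h); exact Hnil).
  assert (Hx : cur p <> []).
  { intros Hx. rewrite covered_of_subtree_used in Hcov; [discriminate|].
    rewrite <- Hx. apply subtree_used_cur; [exact Hi|].
    intros c Hc. apply Hall, In_nbrs; auto. }
  unfold next_potential, step. rewrite Hnil.
  set (U := unused_weight d h p).
  rewrite (sumR_ext _ _ (fun w : V => / INR (length (nbrs d h (cur p))) * (U + climb_time d h (length w))))
    by (intros w Hw; unfold potential; rewrite cur_app, unused_weight_used_step; auto).
  rewrite sumR_scal. unfold potential. fold U.
  destruct (exists_last Hx) as [y [l Hxy]]. set (m := length y).
  assert (Hm : length (cur p) = S m) by (rewrite Hxy; apply length_snoc).
  rewrite nbrs_nonroot by exact Hx. rewrite Hm.
  replace (removelast (cur p)) with y by (rewrite Hxy, removelast_last; reflexivity).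
  unfold children. rewrite Hm. destruct (Nat.ltb_spec (S m) h) as [Hlt|Hge].
  - rewrite length_cons, length_map, length_seq.
    change (sumR ?f (y :: ?l)) with (f y + sumR f l). rewrite sumR_map.
    rewrite (sumR_ext _ _ (fun _ => U + climb_time d h (S (S m))))
      by (intros i _; rewrite length_snoc, Hm; reflexivity).
    rewrite sumR_const, length_seq, S_INR. fold m.
    assert (Hh := climb_time_inner d h m Hlt). assert (0 <= INR d) by apply pos_INR.
    replace (U + climb_time d h m + INR d * (U + climb_time d h (S (S m))))
      with ((INR d + 1) * (U + climb_time d h (S m) - 1)) by lra.
    apply Req_le. field. lra.
  - cbn [length sumR map fold_right]. fold m. simpl (INR 1).
    rewrite (climb_time_leaf d h m) by (destruct (proj1 (In_verts d h _) (inv_vertex Hi)); lia).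
    lra.
Qed.

Lemma next_potential_greedy d h rule p : valid_rule d h rule -> p <> [] -> walk_inv d h p ->
  unused_nbrs d h p <> [] -> next_potential d h rule p <= potential d h p - 1.
Proof.
  intros Hv Hp Hi Hun. destruct (Hv p Hun) as [Hnn [Hz Hs]].
  unfold next_potential, step. destruct (unused_nbrs d h p) eqn:E; [congruence|].
  rewrite <- E in *.
  apply Rle_trans with (sumR (fun w => rule p w * (potential d h p - 1)) (nbrs d h (cur p))).
  - apply sumR_le. intros w Hw.
    destruct (in_dec (list_eq_dec Nat.eq_dec) w (unused_nbrs d h p)) as [Hin|Hnin].
    + apply Rmult_le_compat_l; [apply Hnn|].
      apply potential_down; [exact Hp|exact Hi|apply unused_nbr_child; assumption|].
      apply In_unused_nbrs in Hin; tauto.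
    + rewrite Hz by exact Hnin. lra.
  - assert (Hsum : sumR (rule p) (nbrs d h (cur p)) = 1).
    { rewrite <- Hs. symmetry. apply sumR_filter.
      intros w Hw Hf. apply Hz. intros Hin. apply filter_In in Hin as [_ Ht]. congruence. }
    rewrite (sumR_ext _ _ (fun w => (potential d h p - 1) * rule p w)) by (intros; lra).
    rewrite sumR_scal, Hsum. lra.
Qed.

(* Paths of probability 0 may violate the invariant: the rule may put no mass on them. *)
Lemma dist_support d h rule : valid_rule d h rule -> forall t pq, In pq (Defs.dist d h rule t) ->
  fst pq <> [] /\ 0 <= snd pq /\ (snd pq = 0 \/ walk_inv d h (fst pq)).
Proof.
  intros Hv t. induction t as [|t IH]; intros pq Hpq; simpl in Hpq.
  - destruct Hpq as [<-|[]]. simpl. split; [congruence|]. split; [lra|].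
    right; apply walk_inv_init.
  - apply in_flat_map in Hpq as [[p q] [Hin Hm]]. apply in_map_iff in Hm as [w [<- Hw]].
    cbn [fst snd] in *. destruct (IH _ Hin) as [Hp [Hq HI]]. cbn [fst snd] in *.
    assert (Hs := step_nonneg d h rule p w Hv).
    split; [destruct p; simpl; congruence|]. split; [apply Rmult_le_pos; assumption|].
    destruct HI as [->|HI]; [left; lra|].
    destruct (Req_dec (step d h rule p w) 0) as [Hzero|Hnz]; [left; rewrite Hzero; lra|].
    right. apply walk_inv_step; try assumption.
    destruct (unused_nbrs d h p) eqn:E; [left; reflexivity|right].
    destruct (in_dec (list_eq_dec Nat.eq_dec) w (unused_nbrs d h p)) as [Hwin|Hwout].
    + rewrite E in Hwin; exact Hwin.
    + exfalso. apply Hnz. unfold step. rewrite E. apply Hv; [rewrite E; congruence|exact Hwout].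
Qed.

Definition expected_potential d h rule t : R :=
  sumR (fun pq => snd pq * (if covered d h (fst pq) then 0 else potential d h (fst pq)))
       (Defs.dist d h rule t).

Lemma expected_potential_nonneg d h rule t : valid_rule d h rule ->
  0 <= expected_potential d h rule t.
Proof.
  intros Hv. apply sumR_nonneg. intros pq Hpq.
  destruct (dist_support d h rule Hv t pq Hpq) as [_ [Hq _]].
  apply Rmult_le_pos; [exact Hq|]. destruct covered; [lra|apply potential_nonneg].
Qed.

Lemma expected_potential_step d h rule t : valid_rule d h rule ->
  expected_potential d h rule (S t) + tail_prob d h rule t <= expected_potential d h rule t.
Proof.
  intros Hv. unfold expected_potential, tail_prob. cbn [Defs.dist]. rewrite sumR_flat_map.
  change (fold_right Rplus 0 (map ?f ?l)) with (sumR f l). rewrite <- sumR_plus.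
  apply sumR_le. intros [p q] Hpq. rewrite sumR_map. cbn [fst snd].
  destruct (dist_support d h rule Hv t _ Hpq) as [Hp [Hq HI]]. cbn [fst snd] in *.
  destruct (covered d h p) eqn:Ec.
  - rewrite (sumR_ext _ _ (fun _ => 0)) by (intros w _; rewrite covered_mono by assumption; lra).
    rewrite sumR_const. lra.
  - destruct HI as [->|HI].
    + rewrite (sumR_ext _ _ (fun _ => 0)) by (intros w _; lra). rewrite sumR_const. lra.
    + assert (Hnext : next_potential d h rule p <= potential d h p - 1).
      { destruct (unused_nbrs d h p) eqn:Eu.
        - apply next_potential_random; assumption.
        - apply next_potential_greedy; try assumption. rewrite Eu; congruence. }
      apply Rle_trans with (q * next_potential d h rule p + q); [|nra].
      apply Rplus_le_compat_r. unfold next_potential. rewrite <- sumR_scal.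
      apply sumR_le. intros w _.
      assert (Hs := step_nonneg d h rule p w Hv).
      assert (HP := potential_nonneg d h (p ++ [w])).
      destruct (covered d h (p ++ [w])); [|lra].
      rewrite Rmult_0_r. apply Rmult_le_pos; [exact Hq|]. apply Rmult_le_pos; assumption.
Qed.

Lemma partial_expect_le d h rule N : valid_rule d h rule ->
  partial_expect d h rule N <= expected_potential d h rule 0.
Proof.
  intros Hv. enough (H : partial_expect d h rule N + expected_potential d h rule N
                         <= expected_potential d h rule 0)
    by (assert (H0 := expected_potential_nonneg d h rule N Hv); lra).
  induction N as [|N IH]; [unfold partial_expect; simpl; lra|].
  change (partial_expect d h rule (S N)) with (sumR (tail_prob d h rule) (seq 0 (S N))).
  rewrite seq_S, sumR_app. change (sumR (tail_prob d h rule) (seq 0 N)) with (partial_expect d h rule N).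
  assert (Hs := expected_potential_step d h rule N Hv).
  unfold sumR at 1; simpl. lra.
Qed.

Lemma tree_size_S d j : tree_size d (S j) = (tree_size d j + d ^ S j)%nat.
Proof.
  induction j as [|j IH]; [simpl; lia|].
  rewrite (Nat.pow_succ_r' d (S j)). cbn [tree_size] in *. nia.
Qed.

Lemma pow_mul_tree_size_le d j k : (d ^ k * tree_size d j <= tree_size d (j + k))%nat.
Proof.
  revert j; induction k as [|k IH]; intros j; [rewrite Nat.add_0_r; simpl; lia|].
  rewrite Nat.pow_succ_r', Nat.add_succ_r, <- Nat.add_succ_l.
  specialize (IH (S j)). cbn [tree_size] in IH. nia.
Qed.

Lemma length_level d k : length (level d k) = (d ^ k)%nat.
Proof.
  induction k as [|k IH]; [reflexivity|]. cbn [level].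
  rewrite (flat_map_constant_length (A := V) (c := d)).
  - rewrite IH, Nat.pow_succ_r'. lia.
  - intros u _. rewrite length_map, length_seq. reflexivity.
Qed.

Lemma nverts_tree_size d h : nverts d h = tree_size d h.
Proof.
  unfold nverts, verts. induction h as [|h IH]; [reflexivity|].
  rewrite seq_S, flat_map_app, length_app, IH, tree_size_S. cbn [flat_map].
  rewrite app_nil_r, length_level. reflexivity.
Qed.

Lemma children_weight_le d h u :
  sumR (fun c : V => 2 * INR (tree_size d (h - length c))) (children d h u)
  <= 2 * INR (tree_size d (h - length u)).
Proof.
  assert (H0 := pos_INR (tree_size d (h - length u))).
  unfold children. destruct (Nat.ltb_spec (length u) h) as [Hlt|Hge]; [|unfold sumR; simpl; lra].
  rewrite sumR_map.
  rewrite (sumR_ext _ _ (fun _ => 2 * INR (tree_size d (h - S (length u)))))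
    by (intros i _; rewrite length_snoc; reflexivity).
  rewrite sumR_const, length_seq.
  replace (h - length u)%nat with (S (h - S (length u))) by lia. cbn [tree_size].
  rewrite plus_INR, mult_INR. simpl (INR 1). lra.
Qed.

Lemma level_weight_le d h k : (k <= h)%nat ->
  sumR (fun u : V => 2 * INR (tree_size d (h - length u))) (level d k)
  <= 2 * INR (tree_size d h).
Proof.
  intros Hk.
  rewrite (sumR_ext _ _ (fun _ => 2 * INR (tree_size d (h - k))))
    by (intros u Hu; apply In_level in Hu as [-> _]; reflexivity).
  rewrite sumR_const, length_level.
  assert (H := pow_mul_tree_size_le d (h - k) k). replace (h - k + k)%nat with h in H by lia.
  apply le_INR in H. rewrite mult_INR in H. lra.
Qed.

Lemma initial_potential_le d h : potential d h [[]] <= 2 * INR (S h) * INR (nverts d h).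
Proof.
  unfold potential, unused_weight. cbn [cur last length climb_time]. rewrite Rplus_0_r.
  rewrite (sumR_ext _ _ (fun e : V * V => 2 * INR (tree_size d (h - length (snd e)))))
    by (intros e _; unfold return_time; simpl; lra).
  unfold edges. rewrite sumR_flat_map.
  apply Rle_trans with (sumR (fun u : V => 2 * INR (tree_size d (h - length u))) (verts d h)).
  { apply sumR_le. intros u _. rewrite sumR_map. apply children_weight_le. }
  unfold verts. rewrite sumR_flat_map.
  apply Rle_trans with (sumR (fun _ => 2 * INR (tree_size d h)) (seq 0 (S h))).
  { apply sumR_le. intros k Hk. apply in_seq in Hk. apply level_weight_le. lia. }
  rewrite sumR_const, length_seq, <- nverts_tree_size. lra.
Qed.

Lemma expected_potential_0_le d h rule : expected_potential d h rule 0 <= potential d h [[]].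
Proof.
  unfold expected_potential, sumR. simpl.
  assert (H := potential_nonneg d h [[]]). destruct covered; lra.
Qed.

Lemma depth_le_log d h : (2 <= d)%nat -> INR h <= ln (INR (nverts d h)) / ln (INR d).
Proof.
  intros Hd.
  assert (Hd1 : 1 < INR d) by (apply lt_1_INR; lia).
  assert (Hlnd : 0 < ln (INR d)) by (rewrite <- ln_1; apply ln_increasing; lra).
  assert (Hpow : INR d ^ h <= INR (nverts d h)).
  { rewrite <- pow_INR, nverts_tree_size. apply le_INR.
    assert (H := pow_mul_tree_size_le d 0 h). simpl in H. lia. }
  assert (Hln : INR h * ln (INR d) <= ln (INR (nverts d h))).
  { rewrite <- ln_pow by lra. destruct (Rle_lt_or_eq_dec _ _ Hpow) as [Hlt|Heq].
    - apply Rlt_le, ln_increasing; [apply pow_lt; lra|exact Hlt].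
    - rewrite Heq; lra. }
  apply Rmult_le_reg_r with (ln (INR d)); [exact Hlnd|].
  unfold Rdiv. rewrite Rmult_assoc, Rinv_l by lra. lra.
Qed.

Theorem mainTheorem10 :
  exists C : R, 0 < C /\
    forall d h : nat, (2 <= d)%nat -> (1 <= h)%nat ->
    forall rule : list V -> V -> R, valid_rule d h rule ->
    forall N : nat,
      partial_expect d h rule N <=
        C * INR (nverts d h) * (ln (INR (nverts d h)) / ln (INR d)).
Proof.
  exists 4. split; [lra|]. intros d h Hd Hh rule Hv N.
  assert (Hcover := partial_expect_le d h rule N Hv).
  assert (Hstart := expected_potential_0_le d h rule).
  assert (Hinit := initial_potential_le d h).
  assert (Hlog := depth_le_log d h Hd).
  assert (Hh1 : 1 <= INR h) by (apply (le_INR 1); exact Hh).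
  assert (Hn := pos_INR (nverts d h)). rewrite S_INR in Hinit.
  set (n := INR (nverts d h)) in *. set (L := ln n / ln (INR d)) in *.
  assert (INR h * n <= L * n) by (apply Rmult_le_compat_r; assumption).
  nra.
Qed.
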